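(* Let $V$ be a finite set with $|V|=n$, let $d$ be a monotone and consistent symmetric set function on $V$, let $\tau\in\mathbb{R}$, and let $v_1,\dots,v_n$ be a lax-back order with threshold $\tau$ for $(V,d)$. Then for every $2\leq i\leq n$, $$\min\{\tau,\lambda_{(V,d)}(v_{i-1},v_i)\}\geq\min\{\tau, d(v_i,\{v_1,\dots,v_{i-1}\})\}.$$
   Context: A symmetric set function $d$ on a finite set $V$ assigns a real number $d(S,T)$ to every ordered pair $(S,T)$ of disjoint subsets of $V$, such that $d(S,T)=d(T,S)$. It is monotone if $d(S,T')\leq d(S,T)$ whenever $S,T$ are disjoint and $T'\subseteq T$; consistent if for all pairwise disjoint $R,S,T$, $d(S,R)\geq d(T,R)$ implies $d(S,R\cup T)\geq d(S\cup R,T)$. For $s,t\in V$, $\lambda_{(V,d)}(s,t)=\min\{d(S,V\setminus S)\mid s\in S\subseteq V,\ t\notin S\}$. Singletons $\{v\}$ are written $v$. An ordering $v_1,\dots,v_n$ of $V$ is a lax-back order with threshold $\tau$ for $(V,d)$ if $\min\{\tau,d(v_i,\{v_1,\dots,v_{i-1}\})\}\geq\min\{\tau,d(v_j,\{v_1,\dots,v_{i-1}\})\}$ for all $1\leq i<j\leq n$. *)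

From mathcomp Require Import all_boot all_order all_algebra.
Set Implicit Arguments. Unset Strict Implicit. Unset Printing Implicit Defensive.
Import Order.TTheory GRing.Theory Num.Theory.
Local Open Scope ring_scope.

(* A set function on V: d S T is meaningful for disjoint S, T. *)
Section SetFun.
Variables (V : finType) (R : realFieldType) (d : {set V} -> {set V} -> R).

Definition symmetric_sf : Prop :=
  forall S T : {set V}, [disjoint S & T] -> d S T = d T S.

Definition monotone_sf : Prop :=
  forall S T T' : {set V}, [disjoint S & T] -> T' \subset T -> d S T' <= d S T.

Definition consistent_sf : Prop :=
  forall R0 S T : {set V},
    [disjoint R0 & S] -> [disjoint R0 & T] -> [disjoint S & T] ->
    d T R0 <= d S R0 -> d (S :|: R0) T <= d S (R0 :|: T).

(* lambda_{(V,d)}(s,t) = min { d(S, V \ S) | s \in S, t \notin S }.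
   The seed d [set s] (~: [set s]) is itself a feasible value whenever s != t,
   so the big min is the true minimum in that case. *)
Definition lambda_sf (s t : V) : R :=
  \big[Order.min/d [set s] (~: [set s])]_(S : {set V} | (s \in S) && (t \notin S))
     d S (~: S).

(* prefix {v_1, ..., v_i} (1-based) = images of the 0-based indices k < i *)
Definition vprefix n (v : 'I_n -> V) (i : nat) : {set V} :=
  [set v k | k : 'I_n & (k < i)%N].

Definition lax_back n (v : 'I_n -> V) (tau : R) : Prop :=
  forall i j : 'I_n, (i < j)%N ->
    Order.min tau (d [set v j] (vprefix v i)) <= Order.min tau (d [set v i] (vprefix v i)).

End SetFun.

(* Write [P k] for the prefix [v_0, ..., v_(k-1)].  A cut [S] separating
   [v_(i-1)] from [v_i] satisfies [d S (~: S) >= d (P (i+1) :\: S) (P (i+1) :&: S)]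
   by monotonicity, so it suffices to show, by induction on [k], that
   [min tau (d v_k (P k)) <= min tau (d (P (k+1) :&: C) (P (k+1) :\: C))]
   whenever [C] contains [v_k] but not [v_(k-1)].  Split [P k] into
   [Y = P k :&: C] and [W = P k :\: C], and let [v_m] be the last vertex of [C]
   before [v_k].  Then [Y] lies in [P (m+1)], so the lax-back property at
   [m+1 < k], the induction hypothesis for [~: C] at [m+1], and monotonicity
   give [min tau (d v_k Y) <= min tau (d W Y)]; consistency then moves [v_k]
   from the [W]-side to the [Y]-side of the cut. *)
From mathcomp Require Import all_boot all_order all_algebra.
Set Implicit Arguments. Unset Strict Implicit. Unset Printing Implicit Defensive.
Import Order.TTheory GRing.Theory Num.Theory.
Local Open Scope ring_scope.

Section Lambda.
Variables (R : realFieldType) (V : finType) (d : {set V} -> {set V} -> R).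

Lemma lambda_sf_ge (s t : V) (c : R) :
  s != t -> (forall S : {set V}, s \in S -> t \notin S -> c <= d S (~: S)) ->
  c <= lambda_sf d s t.
Proof.
move=> neq_st cut_ge; apply: (big_ind (fun x => c <= x)).
- by apply: cut_ge; rewrite !inE ?eqxx // eq_sym.
- by move=> x y cx cy; rewrite le_min cx cy.
- by move=> S /andP[]; apply: cut_ge.
Qed.

End Lambda.

Lemma disjoint_setUr (T : finType) (A B C : {set T}) :
  [disjoint A & B :|: C] = [disjoint A & B] && [disjoint A & C].
Proof. by rewrite !disjoints_subset setCU subsetI. Qed.

Section Prefix.
Variables (V : finType) (n : nat) (v : 'I_n -> V).

Lemma vprefixS (k : 'I_n) : vprefix v k.+1 = v k |: vprefix v k.
Proof.
rewrite /vprefix -imsetU1; congr (imset _ (mem (pred_of_set _))).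
by apply/setP => a; rewrite !inE ltnS leq_eqVlt.
Qed.

Lemma vprefix_subset (m p : nat) : (m <= p)%N -> vprefix v m \subset vprefix v p.
Proof.
move=> le_mp; apply/subsetP => x /imsetP[a]; rewrite inE => lt_am ->.
by apply: imset_f; rewrite inE (leq_trans lt_am le_mp).
Qed.

Hypothesis v_inj : injective v.

Lemma mem_vprefix (a : 'I_n) (m : nat) : (v a \in vprefix v m) = (a < m)%N.
Proof.
apply/imsetP/idP => [[b]|lt_am]; last by exists a; rewrite ?inE.
by rewrite inE => lt_bm /v_inj ->.
Qed.

End Prefix.

Section SetFunction.
Variables (R : realFieldType) (V : finType) (d : {set V} -> {set V} -> R) (tau : R).
Hypotheses (d_sym : symmetric_sf d) (d_mono : monotone_sf d) (d_cons : consistent_sf d).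

Lemma monotone2_sf (S T S' T' : {set V}) :
  [disjoint S & T] -> S' \subset S -> T' \subset T -> d S' T' <= d S T.
Proof.
move=> dis_ST sub_S sub_T; have dis_S'T := disjointWl sub_S dis_ST.
apply: le_trans (d_mono dis_S'T sub_T) _.
rewrite d_sym // [d S T]d_sym //.
by apply: d_mono; rewrite // disjoint_sym.
Qed.

(* If [d X Y <= d W Y] fails, the hypothesis forces [tau <= d W Y] and
   monotonicity alone concludes. *)
Lemma min_consistent_sf (X Y W : {set V}) :
  [disjoint Y & W] -> [disjoint Y & X] -> [disjoint W & X] ->
  Order.min tau (d X Y) <= Order.min tau (d W Y) ->
  Order.min tau (d (W :|: Y) X) <= Order.min tau (d W (Y :|: X)).
Proof.
move=> dis_YW dis_YX dis_WX le_XW.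
have [le_dXW | lt_dWX] := leP (d X Y) (d W Y).
  by apply: le_min2 => //; apply: d_cons.
have le_tau_W : tau <= d W Y.
  by move: le_XW; rewrite le_min !ge_min lexx /= => /orP[//|]; rewrite leNgt lt_dWX.
have dis_W_YX : [disjoint W & Y :|: X].
  by rewrite disjoint_setUr disjoint_sym dis_YW dis_WX.
rewrite [X in _ <= X]min_l ?ge_min ?lexx //.
exact: le_trans le_tau_W (d_mono dis_W_YX (subsetUl _ _)).
Qed.

Section Ordering.
Variables (n : nat) (v : 'I_n -> V).
Hypotheses (v_inj : injective v) (v_lax : lax_back d v tau).

Lemma prefix_cut_step (k' k : 'I_n) (C : {set V}) :
  (k' < k)%N -> v k \in C -> vprefix v k :&: C \subset vprefix v k' ->
  Order.min tau (d [set v k'] (vprefix v k')) <=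
    Order.min tau (d (vprefix v k'.+1 :\: C) (vprefix v k'.+1 :&: C)) ->
  Order.min tau (d [set v k] (vprefix v k)) <=
    Order.min tau (d (vprefix v k.+1 :&: C) (vprefix v k.+1 :\: C)).
Proof.
move=> lt_k'k vkC sub_Y le_k'.
set Y := vprefix v k :&: C; set W := vprefix v k :\: C.
have vk_notin : v k \notin vprefix v k by rewrite mem_vprefix // ltnn.
have dis_YW : [disjoint Y & W].
  by rewrite disjoints_subset; apply/subsetP => x /setIP[_ xC]; rewrite !inE xC.
have dis_YX : [disjoint Y & [set v k]].
  by rewrite disjoint_sym disjoints1 inE negb_and vk_notin.
have dis_WX : [disjoint W & [set v k]].
  by rewrite disjoint_sym disjoints1 inE vkC.
have le_Y : d [set v k] Y <= d [set v k] (vprefix v k').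
  by apply: d_mono sub_Y; rewrite disjoints1 mem_vprefix // -leqNgt ltnW.
have le_W : d (vprefix v k'.+1 :\: C) (vprefix v k'.+1 :&: C) <= d W Y.
  have sub_k := vprefix_subset v lt_k'k.
  by apply: monotone2_sf; [rewrite disjoint_sym | apply: setSD | apply: setSI].
have := min_consistent_sf dis_YW dis_YX dis_WX
  (le_trans (le_min2 (lexx tau) le_Y)
  (le_trans (v_lax lt_k'k) (le_trans le_k' (le_min2 (lexx tau) le_W)))).
have -> : vprefix v k.+1 :&: C = Y :|: [set v k].
  by rewrite vprefixS setIUl (setIidPl _) ?sub1set // setUC.
have -> : vprefix v k.+1 :\: C = W.
  by rewrite vprefixS setDUl (eqP (_ : [set v k] :\: C == set0)) ?set0U // setD_eq0 sub1set.
have dis_P_X : [disjoint vprefix v k & [set v k]].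
  by rewrite disjoint_sym disjoints1.
have dis_YX_W : [disjoint Y :|: [set v k] & W].
  by rewrite disjoint_sym disjoint_setUr [[disjoint W & Y]]disjoint_sym dis_YW dis_WX.
by rewrite setUC setID d_sym // [d _ W]d_sym.
Qed.

Lemma prefix_cut_ge (k1 k : 'I_n) (C : {set V}) :
  k1.+1 = k :> nat -> v k1 \notin C -> v k \in C ->
  Order.min tau (d [set v k] (vprefix v k)) <=
    Order.min tau (d (vprefix v k.+1 :&: C) (vprefix v k.+1 :\: C)).
Proof.
have [N] := ubnP k; elim: N => // N IH in k1 k C *; rewrite ltnS => le_kN k1k vk1C vkC.
case: (pickP [pred m : 'I_n | (m < k)%N && (v m \in C)]) => [m0 m0C | noC]; last first.
  have dis_PC : [disjoint vprefix v k & C].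
    rewrite disjoints_subset; apply/subsetP => x /imsetP[a]; rewrite inE => lt_ak ->.
    by have := noC a; rewrite /= lt_ak inE => /negbT.
  rewrite vprefixS setIUl setDUl (disjoint_setI0 dis_PC) (setDidPl dis_PC).
  rewrite (setIidPl _) ?sub1set // setU0 (_ : [set v k] :\: C = set0) ?set0U //.
  by apply/eqP; rewrite setD_eq0 sub1set.
have [m /andP[lt_mk vmC] max_m] := arg_maxnP (@nat_of_ord n) m0C.
have lt_m1k : (m.+1 < k)%N.
  have ne_mk1 : m != k1 by apply: contraTneq vmC => ->.
  by rewrite -k1k ltnS ltn_neqAle ne_mk1 -ltnS k1k.
pose k' := Ordinal (ltn_trans lt_m1k (ltn_ord k)).
have vk'C : v k' \notin C.
  by apply/negP => vk'C; have := max_m k'; rewrite /= lt_m1k vk'C ltnn => /(_ isT).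
apply: (prefix_cut_step (k' := k') lt_m1k vkC).
  apply/subsetP => x /setIP[/imsetP[a]]; rewrite inE => lt_ak -> vaC.
  by rewrite mem_vprefix // ltnS; apply: max_m; rewrite /= lt_ak.
have := IH m k' (~: C) (leq_trans lt_m1k le_kN) erefl.
rewrite !inE negbK => /(_ vmC vk'C).
by rewrite -setDE (setDE _ (~: C)) setCK.
Qed.

Lemma le_separating_cut (k1 k : 'I_n) (S : {set V}) :
  k1.+1 = k :> nat -> v k1 \in S -> v k \notin S ->
  Order.min tau (d [set v k] (vprefix v k)) <= d S (~: S).
Proof.
move=> k1k vk1S vkS.
have := prefix_cut_ge k1k (C := ~: S); rewrite !inE negbK => /(_ vk1S vkS).
move/le_trans; apply; rewrite ge_min; apply/orP; right.
have dis_S : [disjoint ~: S & S] by rewrite disjoint_sym -subsets_disjoint.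
rewrite [d S _]d_sym; last by rewrite disjoint_sym.
by apply: monotone2_sf; rewrite ?subsetIr // setDE setCK subsetIr.
Qed.

End Ordering.
End SetFunction.

Theorem lemma5 (R : realFieldType) (V : finType) (d : {set V} -> {set V} -> R)
  (tau : R) (v : 'I_#|V| -> V) :
  symmetric_sf d -> monotone_sf d -> consistent_sf d ->
  bijective v -> lax_back d v tau ->
  forall (i j : 'I_#|V|), (1 <= i)%N -> nat_of_ord j = i.-1 ->
    Order.min tau (d [set v i] (vprefix v i)) <= Order.min tau (lambda_sf d (v j) (v i)).
Proof.
move=> d_sym d_mono d_cons [w vK _] v_lax i j i_gt0 j_def.
have v_inj : injective v := can_inj vK.
have ji : j.+1 = i :> nat by rewrite j_def prednK.
rewrite le_min ge_min lexx /=.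
apply: lambda_sf_ge => [|S vjS viS].
  by rewrite (inj_eq v_inj) -val_eqE /= -ji neq_ltn ltnSn.
exact: (le_separating_cut d_sym d_mono d_cons v_inj v_lax ji vjS viS).
Qed.
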